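(* Let $H_0,H_1$ be complex Hilbert spaces, $G$ a densely defined closed operator from $H_0$ into $H_1$ and $D$ a densely defined closed operator from $H_1$ into $H_0$ with $-G^*\subset D$. Let $a\in\mathcal L(H_1)$ and $m\in\mathcal L(H_0)$ be coercive and let $q_0\in\mathrm{BD}(D)$. Then there exists a unique $u\in\mathrm{dom}(DaG)$ such that $mu-DaGu=0$ and $aGu-q_0\in\mathrm{dom}(\mathring D)$.
   Context: $\mathring D=-G^*$, $\mathring G=-D^*$. Domains carry graph inner products, e.g. $(q,r)_{\mathrm{dom}(D)}=(q,r)_{H_1}+(Dq,Dr)_{H_0}$. $\mathrm{BD}(D)$ is the orthogonal complement of $\mathrm{dom}(\mathring D)$ in $\mathrm{dom}(D)$. $\mathrm{dom}(DaG)=\{u\in\mathrm{dom}(G):aGu\in\mathrm{dom}(D)\}$. Coercive: $\mathrm{Re}(Mx,x)\ge\mu\|x\|^2$ for some $\mu>0$. *)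

From mathcomp Require Import all_boot all_algebra.
From mathcomp Require Import complex.
From mathcomp Require Import reals.
Import GRing.Theory Num.Theory.
Set Implicit Arguments. Unset Strict Implicit. Unset Printing Implicit Defensive.
Local Open Scope ring_scope.

Section Hilbert.
Variable R : realType.
Local Notation C := (R[i]).

Definition is_inner_product (V : lmodType C) (ip : V -> V -> C) : Prop :=
  [/\ (forall (a : C) (x y z : V), ip (a *: x + y) z = a * ip x z + ip y z),
      (forall x y : V, ip y x = (ip x y)^*),
      (forall x : V, 0 <= ip x x) &
      (forall x : V, ip x x = 0 -> x = 0)].

Definition hnorm (V : lmodType C) (ip : V -> V -> C) (x : V) : R :=
  Num.sqrt (complex.Re (ip x x)).

Definition hcvg (V : lmodType C) (ip : V -> V -> C) (u : nat -> V) (l : V) : Prop :=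
  forall e : R, 0 < e -> exists N : nat, forall n, (N <= n)%N -> hnorm ip (u n - l) < e.

Definition hcauchy (V : lmodType C) (ip : V -> V -> C) (u : nat -> V) : Prop :=
  forall e : R, 0 < e -> exists N : nat, forall n m, (N <= n)%N -> (N <= m)%N ->
    hnorm ip (u n - u m) < e.

Definition is_hilbert (V : lmodType C) (ip : V -> V -> C) : Prop :=
  is_inner_product ip /\
  (forall u : nat -> V, hcauchy ip u -> exists l : V, hcvg ip u l).

(* A (possibly unbounded) linear operator from V to W is given by its domain
   domA : V -> Prop and its action A : V -> W (values of A outside domA are
   irrelevant). *)
Definition is_linop (V W : lmodType C) (domA : V -> Prop) (A : V -> W) : Prop :=
  domA 0 /\
  (forall (a : C) (x y : V), domA x -> domA y ->
     domA (a *: x + y) /\ A (a *: x + y) = a *: A x + A y).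

Definition densely_defined (V : lmodType C) (ipV : V -> V -> C)
  (domA : V -> Prop) : Prop :=
  forall (x : V) (e : R), 0 < e -> exists y : V, domA y /\ hnorm ipV (x - y) < e.

Definition closed_op (V W : lmodType C) (ipV : V -> V -> C) (ipW : W -> W -> C)
  (domA : V -> Prop) (A : V -> W) : Prop :=
  forall (u : nat -> V) (x : V) (y : W),
    (forall n, domA (u n)) -> hcvg ipV u x -> hcvg ipW (A \o u) y ->
    domA x /\ A x = y.

Definition adjoint_graph (V W : lmodType C) (ipV : V -> V -> C) (ipW : W -> W -> C)
  (domA : V -> Prop) (A : V -> W) (y : W) (z : V) : Prop :=
  forall x : V, domA x -> ipW (A x) y = ipV x z.

Definition dom_adjoint (V W : lmodType C) (ipV : V -> V -> C) (ipW : W -> W -> C)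
  (domA : V -> Prop) (A : V -> W) (y : W) : Prop :=
  exists z : V, adjoint_graph ipV ipW domA A y z.

Definition bounded (V : lmodType C) (ipV : V -> V -> C) (a : V -> V) : Prop :=
  exists c : R, forall x : V, hnorm ipV (a x) <= c * hnorm ipV x.

Definition coercive (V : lmodType C) (ipV : V -> V -> C) (a : V -> V) : Prop :=
  exists mu : R, 0 < mu /\
    forall x : V, mu * hnorm ipV x ^+ 2 <= complex.Re (ipV (a x) x).

End Hilbert.

(* The problem has a weak formulation on the graph of [G]: since [-G^* ⊂ D], a vector
   [u ∈ dom G] solves it iff
     [<m u, x> + <a G u, G x> = <D q0, x> + <q0, G x>]   for all [x ∈ dom G],
   the relation [a G u - q0 ∈ dom G^*] with [G^*(a G u - q0) = m u - D q0] being
   exactly [D (a G u) = m u].  The left-hand side is [<T (u, G u), (x, G x)>] for the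
   bounded coercive operator [T = m ⊕ a] on [H0 × H1], and the graph of the closed
   operator [G] is a closed subspace, so the Lax–Milgram theorem on that subspace gives
   existence.  For the difference [w] of two solutions, testing with [x = w] gives
   [Re <m w, w> + Re <a G w, G w> = 0], hence [w = 0] by coercivity.
   Lax–Milgram is reduced to the Riesz representation theorem, proved by minimizing
   [|v|^2 - 2 Re g(v)] over the subspace: the parallelogram law makes minimizing
   sequences Cauchy. *)

From mathcomp Require Import all_boot all_order all_algebra.
From mathcomp Require Import complex reals.
From mathcomp Require Import ring lra.
From mathcomp Require Import boolp classical_sets.
Import Order.TTheory GRing.Theory Num.Theory complex.
Local Open Scope complex_scope.
Local Open Scope ring_scope.

Section ComplexParts.
Context {R : realType}.
Implicit Types z w : R[i].

Lemma ReD z w : Re (z + w) = Re z + Re w.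
Proof. by case: z => a b; case: w => c d. Qed.
Lemma ReN z : Re (- z) = - Re z.
Proof. by case: z. Qed.
Lemma ReJ z : Re (z^*) = Re z.
Proof. by case: z. Qed.
Lemma ReMrC (c : R) z : Re (c%:C * z) = c * Re z.
Proof. by case: z => a b /=; ring. Qed.
Lemma Re_conji_mul z : Re ('i^* * z) = Im z.
Proof. by case: z => a b /=; ring. Qed.
Lemma conj_realC (c : R) : (c%:C)^* = c%:C :> R[i].
Proof. exact: conjc_real. Qed.
Lemma complex_ext z w : Re z = Re w -> Im z = Im w -> z = w.
Proof. by case: z => a b; case: w => c d /= -> ->. Qed.
Lemma ge0_complex {z : R[i]} : 0 <= z -> Im z = 0 /\ 0 <= Re z.
Proof. by case: z => a b; rewrite lecE /= => /andP[/eqP <- ->]. Qed.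
Lemma conj_inj : injective (fun z : R[i] => z^*).
Proof. exact: (can_inj conjCK). Qed.

End ComplexParts.

Lemma subr_eq_swap {T : zmodType} (x y z t : T) : x - y = z - t <-> t + x = z + y.
Proof.
split=> h; first by rewrite -[x](subrK y) h addrCA subrKA.
by apply: (addrI t); rewrite addrA h addrK subrKC.
Qed.

Lemma inv_succ_lt {R : realType} {e : R} : 0 < e ->
  exists N : nat, forall n, (N <= n)%N -> n.+1%:R^-1 < e.
Proof.
move=> e0; have e1 : 0 <= e^-1 by rewrite invr_ge0 ltW.
exists (Num.Def.archi_bound e^-1) => n hn.
have hb := archi_boundP e1.
have hN : (Num.Def.archi_bound e^-1)%:R <= n%:R :> R by rewrite ler_nat.
have hS : n%:R < n.+1%:R :> R by rewrite ltr_nat.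
rewrite invf_plt ?posrE ?ltr0Sn //; lra.
Qed.

Lemma sqr_le_cancel {R : realType} (a c t : R) : 0 <= t -> 0 <= c ->
  a * t ^+ 2 <= c * t -> a * t <= c.
Proof.
move=> t0 c0 h; have [->|tn0] := eqVneq t 0; first by rewrite mulr0.
have tp : 0 < t by rewrite lt_def tn0 t0.
by rewrite -(ler_pM2r tp) -mulrA -expr2.
Qed.

Lemma nonneg_quadratic_linear_coef0 {R : realType} (c q : R) : 0 <= q ->
  (forall t, 0 <= c * t + q * t ^+ 2) -> c = 0.
Proof.
(* Evaluate at [t = -c/(q+1)]. *)
move=> q0 h; set s := q + 1.
have s0 : 0 < s by rewrite /s; lra.
have ts : (- c / s) * s = - c by rewrite mulfVK // gt_eqF.
have : 0 <= (c * (- c / s) + q * (- c / s) ^+ 2) * s ^+ 2 by rewrite mulr_ge0 ?h ?sqr_ge0.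
have -> : (c * (- c / s) + q * (- c / s) ^+ 2) * s ^+ 2 =
  c * ((- c / s) * s) * s + q * ((- c / s) * s) ^+ 2 by ring.
rewrite ts /s => h'.
have hc : c ^+ 2 <= 0 by nra.
by apply/eqP; rewrite -sqrf_eq0 eq_le hc sqr_ge0.
Qed.

Definition sqnorm {R : realType} {V : lmodType R[i]} (ip : V -> V -> R[i]) (x : V) : R :=
  Re (ip x x).
Definition reip {R : realType} {V : lmodType R[i]} (ip : V -> V -> R[i]) (x y : V) : R :=
  Re (ip x y).

Lemma hnorm_ge0 {R : realType} {V : lmodType R[i]} (ip : V -> V -> R[i]) (x : V) :
  0 <= hnorm ip x.
Proof. exact: sqrtr_ge0. Qed.

Section InnerProduct.
Context {R : realType} {V : lmodType R[i]} {ip : V -> V -> R[i]}.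
Hypothesis Hip : is_inner_product ip.
Local Notation nm := (hnorm ip).
Implicit Types (x y z v : V) (a : R[i]).

Lemma ipL a x y z : ip (a *: x + y) z = a * ip x z + ip y z.
Proof. by case: Hip. Qed.
Lemma ipC x y : ip y x = (ip x y)^*.
Proof. by case: Hip. Qed.
Lemma ip_ge0 x : 0 <= ip x x.
Proof. by case: Hip. Qed.
Lemma ip_eq0 x : ip x x = 0 -> x = 0.
Proof. by case: Hip => _ _ _; apply. Qed.

Lemma ip0l z : ip 0 z = 0.
Proof.
have := ipL 1 0 0 z; rewrite scaler0 addr0 mul1r => h.
by apply: (addrI (ip 0 z)); rewrite addr0 -h.
Qed.
Lemma ipDl x y z : ip (x + y) z = ip x z + ip y z.
Proof. by rewrite -[x]scale1r ipL mul1r scale1r. Qed.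
Lemma ipZl a x z : ip (a *: x) z = a * ip x z.
Proof. by rewrite -[a *: x]addr0 ipL ip0l addr0. Qed.
Lemma ipNl x z : ip (- x) z = - ip x z.
Proof. by rewrite -scaleN1r ipZl mulN1r. Qed.
Lemma ipBl x y z : ip (x - y) z = ip x z - ip y z.
Proof. by rewrite ipDl ipNl. Qed.
Lemma ip0r z : ip z 0 = 0.
Proof. by rewrite ipC ip0l rmorph0. Qed.
Lemma ipDr x y z : ip z (x + y) = ip z x + ip z y.
Proof. by rewrite ipC ipDl rmorphD /= -!ipC. Qed.
Lemma ipZr a x z : ip z (a *: x) = a^* * ip z x.
Proof. by rewrite ipC ipZl rmorphM /= -ipC. Qed.
Lemma ipNr x z : ip z (- x) = - ip z x.
Proof. by rewrite -scaleN1r ipZr rmorphN1 mulN1r. Qed.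

Local Notation n2 := (sqnorm ip).
Local Notation rp := (reip ip).

Lemma sqnorm_ge0 x : 0 <= n2 x.
Proof. by case: (ge0_complex (ip_ge0 x)). Qed.
Lemma sqnorm_eq0 x : n2 x = 0 -> x = 0.
Proof.
move=> h; apply: ip_eq0; apply: complex_ext; first by rewrite -/(sqnorm ip x) h.
by case: (ge0_complex (ip_ge0 x)).
Qed.
Lemma reipC x y : rp y x = rp x y.
Proof. by rewrite /reip ipC ReJ. Qed.
Lemma reipDl x y z : rp (x + y) z = rp x z + rp y z.
Proof. by rewrite /reip ipDl ReD. Qed.
Lemma reipDr x y z : rp x (y + z) = rp x y + rp x z.
Proof. by rewrite /reip ipDr ReD. Qed.
Lemma reipNr x y : rp x (- y) = - rp x y.
Proof. by rewrite /reip ipNr ReN. Qed.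
Lemma reipZl (c : R) x y : rp (c%:C *: x) y = c * rp x y.
Proof. by rewrite /reip ipZl ReMrC. Qed.
Lemma reipZr (c : R) x y : rp x (c%:C *: y) = c * rp x y.
Proof. by rewrite /reip ipZr conj_realC ReMrC. Qed.

Lemma sqnormD x y : n2 (x + y) = n2 x + 2 * rp x y + n2 y.
Proof. by rewrite /sqnorm -!/(reip _ _ _) reipDl !reipDr (reipC x y); ring. Qed.
Lemma sqnormN x : n2 (- x) = n2 x.
Proof. by rewrite /sqnorm ipNl ipNr opprK. Qed.
Lemma sqnormB x y : n2 (x - y) = n2 x - 2 * rp x y + n2 y.
Proof. by rewrite sqnormD reipNr sqnormN; ring. Qed.
Lemma sqnormZ (c : R) x : n2 (c%:C *: x) = c ^+ 2 * n2 x.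
Proof. by rewrite /sqnorm -/(reip _ _ _) reipZl reipZr; ring. Qed.

Lemma hnorm_sqr x : nm x ^+ 2 = n2 x.
Proof. by rewrite /hnorm sqr_sqrtr // sqnorm_ge0. Qed.
Lemma hnorm_eq0 x : nm x = 0 -> x = 0.
Proof. by move=> h; apply: sqnorm_eq0; rewrite -hnorm_sqr h expr0n. Qed.
Lemma hnormN x : nm (- x) = nm x.
Proof. by rewrite /hnorm -/(sqnorm _ _) sqnormN. Qed.
Lemma hnormBC x y : nm (x - y) = nm (y - x).
Proof. by rewrite -hnormN opprB. Qed.

Lemma cauchy_schwarz x y : rp x y <= nm x * nm y.
Proof.
set a := nm x; set b := nm y.
have ha : 0 <= a := hnorm_ge0 ip x.
have hb : 0 <= b := hnorm_ge0 ip y.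
have [->|x0] := eqVneq x 0; first by rewrite /reip ip0l /= mulr_ge0.
have [->|y0] := eqVneq y 0; first by rewrite /reip ip0r /= mulr_ge0.
have a0 : a != 0 by apply: contra_neq x0; exact: hnorm_eq0.
have b0 : b != 0 by apply: contra_neq y0; exact: hnorm_eq0.
have hab : 0 < a * b by rewrite mulr_gt0 // lt_def ?a0 ?b0.
have h := sqnorm_ge0 (b%:C *: x - a%:C *: y).
rewrite sqnormB !sqnormZ reipZl reipZr -!hnorm_sqr -/a -/b in h.
have : a * b * rp x y <= a * b * (a * b) by nra.
by rewrite ler_pM2l.
Qed.

Lemma hnormD_le x y : nm (x + y) <= nm x + nm y.
Proof.
have := hnorm_ge0 ip (x + y); have := hnorm_ge0 ip x; have := hnorm_ge0 ip y.
move=> *; rewrite -(ler_pXn2r (_ : 0 < 2)%N) ?nnegrE ?addr_ge0 //.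
rewrite hnorm_sqr sqnormD -!hnorm_sqr; have := cauchy_schwarz x y; nra.
Qed.

Lemma hnorm_lt x (e : R) : 0 < e -> n2 x < e ^+ 2 -> nm x < e.
Proof.
move=> e0 h; rewrite ltNge; apply/negP => he.
have := hnorm_sqr x; have := hnorm_ge0 ip x; nra.
Qed.

Lemma hnorm_small_eq0 x : (forall e : R, 0 < e -> nm x < e) -> x = 0.
Proof.
move=> h; apply: hnorm_eq0; apply/eqP; rewrite eq_le hnorm_ge0 andbT.
by apply/ler_addgt0Pr => e e0; rewrite add0r; exact: ltW (h e e0).
Qed.

Lemma hcvg_cauchy {u l} : hcvg ip u l -> hcauchy ip u.
Proof.
move=> h e e0; have [N hN] := h _ (divr_gt0 e0 (ltr0Sn _ 1)).
exists N => n m hn hm.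
have := hnormD_le (u n - l) (l - u m); rewrite addrA subrK (hnormBC l).
have := hN _ hn; have := hN _ hm; move=> *; lra.
Qed.

End InnerProduct.

Definition subspace {R : realType} {V : lmodType R[i]} (S : V -> Prop) : Prop :=
  S 0 /\ (forall a x y, S x -> S y -> S (a *: x + y)).
Definition closed_set {R : realType} {V : lmodType R[i]} (ip : V -> V -> R[i])
  (S : V -> Prop) : Prop :=
  forall u l, (forall n, S (u n)) -> hcvg ip u l -> S l.
Definition complete {R : realType} {V : lmodType R[i]} (ip : V -> V -> R[i]) : Prop :=
  forall u, hcauchy ip u -> exists l, hcvg ip u l.
Definition antilinear_on {R : realType} {V : lmodType R[i]} (S : V -> Prop)
  (g : V -> R[i]) : Prop :=
  forall a x y, S x -> S y -> g (a *: x + y) = a^* * g x + g y.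

Section Subspace.
Context {R : realType} {V : lmodType R[i]} {S : V -> Prop}.
Hypothesis HS : subspace S.
Implicit Types (x y : V) (a : R[i]).

Lemma subspace0 : S 0. Proof. by case: HS. Qed.
Lemma subspaceP a {x y} : S x -> S y -> S (a *: x + y). Proof. by case: HS => _; apply. Qed.
Lemma subspaceZ a {x} : S x -> S (a *: x).
Proof. by move=> Sx; rewrite -[a *: x]addr0; apply: subspaceP => //; apply: subspace0. Qed.
Lemma subspaceD {x y} : S x -> S y -> S (x + y).
Proof. by move=> Sx Sy; rewrite -[x]scale1r; apply: subspaceP. Qed.
Lemma subspaceB {x y} : S x -> S y -> S (x - y).
Proof. by move=> Sx Sy; rewrite addrC -scaleN1r; apply: subspaceP. Qed.

Context {g : V -> R[i]}.
Hypothesis Hg : antilinear_on S g.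

Lemma antilinear0 : g 0 = 0.
Proof.
have := @Hg 1 0 0 subspace0 subspace0; rewrite scale1r addr0 rmorph1 mul1r => h.
by apply: (addrI (g 0)); rewrite addr0 -h.
Qed.
Lemma antilinearZ a x : S x -> g (a *: x) = a^* * g x.
Proof. by move=> Sx; rewrite -[a *: x]addr0 Hg ?antilinear0 ?addr0 //; apply: subspace0. Qed.
Lemma antilinearD x y : S x -> S y -> g (x + y) = g x + g y.
Proof. by move=> Sx Sy; rewrite -[x]scale1r Hg // rmorph1 mul1r scale1r. Qed.
Lemma antilinearN x : S x -> g (- x) = - g x.
Proof. by move=> Sx; rewrite -scaleN1r antilinearZ // rmorphN1 mulN1r. Qed.
Lemma Re_antilinearZ (c : R) x : S x -> Re (g (c%:C *: x)) = c * Re (g x).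
Proof. by move=> Sx; rewrite antilinearZ // conj_realC ReMrC. Qed.

End Subspace.

Section Riesz.
Context {R : realType} {V : lmodType R[i]} {ip : V -> V -> R[i]}.
Hypotheses (Hip : is_inner_product ip) (Hc : complete ip).
Context {S : V -> Prop} {g : V -> R[i]} {K : R}.
Hypotheses (HS : subspace S) (HSc : closed_set ip S) (Hg : antilinear_on S g).
Hypothesis HK : forall v, S v -> Re (g v) <= K * hnorm ip v.
Local Notation nm := (hnorm ip).
Local Notation n2 := (sqnorm ip).

Definition energy v := n2 v - 2 * Re (g v).

Lemma energy_lbound v : S v -> - K ^+ 2 <= energy v.
Proof.
move=> Sv; have := HK _ Sv; have := hnorm_sqr Hip v; have := hnorm_ge0 ip v.
have := sqr_ge0 (nm v - K); rewrite /energy; nra.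
Qed.

Lemma energy_parallelogram x y : S x -> S y ->
  n2 (x - y) = 2 * energy x + 2 * energy y - 4 * energy ((2^-1)%:C *: (x + y)).
Proof.
move=> Sx Sy; have Sxy := subspaceD HS Sx Sy.
rewrite /energy sqnormZ // (Re_antilinearZ HS Hg _ _ Sxy) (antilinearD Hg _ _ Sx Sy) ReD.
by rewrite sqnormB // sqnormD //; field.
Qed.

Definition energy_inf := inf [set energy v | v in S].

Lemma energy_inf_le {v} : S v -> energy_inf <= energy v.
Proof.
move=> Sv; apply: ge_inf; last by exists v.
by exists (- K ^+ 2) => _ [w Sw <-]; apply: energy_lbound.
Qed.

Lemma minimizing_sequence :
  exists vs : nat -> V, forall n, S (vs n) /\ energy (vs n) < energy_inf + n.+1%:R^-1.
Proof.
have hinf : has_inf [set energy v | v in S].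
  split; first by exists (energy 0), 0 => //; apply: subspace0.
  by exists (- K ^+ 2) => _ [w Sw <-]; apply: energy_lbound.
suff /choice[vs Hvs] : forall n : nat, exists v, S v /\ energy v < energy_inf + n.+1%:R^-1.
  by exists vs.
move=> n; have en : 0 < n.+1%:R^-1 :> R by rewrite invr_gt0.
have [_ [v Sv <-] hv] := inf_adherent en hinf.
by exists v.
Qed.

Section MinimizingSequence.
Context {vs : nat -> V}.
Hypothesis Hvs : forall n, S (vs n) /\ energy (vs n) < energy_inf + n.+1%:R^-1.

Lemma minimizing_cauchy : hcauchy ip vs.
Proof.
move=> e e0; have e4 : 0 < e ^+ 2 / 4 by rewrite divr_gt0 // exprn_gt0.
have [N hN] := inv_succ_lt e4.
exists N => n m hn hm; apply: hnorm_lt => //.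
have [Sn Jn] := Hvs n; have [Sm Jm] := Hvs m.
have := energy_inf_le (subspaceZ HS (2^-1)%:C (subspaceD HS Sn Sm)).
rewrite energy_parallelogram //.
move: Jn Jm (hN _ hn) (hN _ hm).
move: (n.+1%:R^-1 : R) (m.+1%:R^-1 : R) => a b *; lra.
Qed.

Lemma energy_shift_le {x y} : S x -> S y ->
  energy (x - y) <= energy x + nm y * (2 * nm x + nm y + 2 * `|K|).
Proof.
move=> Sx Sy.
have hxy : - reip ip x y <= nm x * nm y.
  by rewrite -reipNr //; apply: (le_trans (cauchy_schwarz Hip _ _)); rewrite hnormN.
have hg : Re (g y) <= `|K| * nm y.
  by apply: (le_trans (HK _ Sy)); apply: ler_wpM2r; [exact: hnorm_ge0 | exact: ler_norm].
rewrite /energy sqnormB // addrC (antilinearD Hg) ?(antilinearN HS Hg) ?ReD ?ReN //;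
  last by rewrite -scaleN1r; apply: subspaceZ.
have := hnorm_sqr Hip y; nra.
Qed.

Lemma energy_limit_le {w} : hcvg ip vs w -> S w -> energy w <= energy_inf.
Proof.
move=> hw Sw; apply/ler_addgt0Pr => eps eps0.
set Q := 2 * nm w + 3 + 2 * `|K|.
have Q0 : 0 < Q by have := hnorm_ge0 ip w; have := normr_ge0 K; rewrite /Q; lra.
have [N1 hN1] := hw 1 ltr01.
have [N2 hN2] := hw _ (divr_gt0 eps0 (mulr_gt0 (ltr0Sn R 1) Q0)).
have [N3 hN3] := inv_succ_lt (divr_gt0 eps0 (ltr0Sn R 1)).
set n := (N1 + N2 + N3)%N.
have t1 := hN1 n (leq_trans (leq_addr N2 N1) (leq_addr N3 _)).
have t2 := hN2 n (leq_trans (leq_addl N1 N2) (leq_addr N3 _)).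
have t3 := hN3 n (leq_addl _ _).
have [Sx Jx] := Hvs n.
have Sy : S (vs n - w) by apply: subspaceB.
have := energy_shift_le Sx Sy; rewrite opprB addrC subrK.
have hx : nm (vs n) <= nm w + nm (vs n - w).
  by have := hnormD_le Hip w (vs n - w); rewrite addrC subrK.
have hQ : nm (vs n - w) * Q <= eps / 2.
  have -> : eps / 2 = eps / (2 * Q) * Q by field; rewrite gt_eqF.
  by rewrite ler_pM2r // ltW.
have := hnorm_ge0 ip (vs n - w); have := hnorm_ge0 ip (vs n).
move: t1 t3 Jx hQ hx; rewrite /Q; move: (n.+1%:R^-1 : R) => r.
nra.
Qed.

End MinimizingSequence.

Lemma energy_minimizer_reip {w} : S w -> (forall v, S v -> energy w <= energy v) ->
  forall v, S v -> reip ip w v = Re (g v).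
Proof.
move=> Sw Jw v Sv.
suff /eqP : 2 * (reip ip w v - Re (g v)) = 0.
  by rewrite mulf_eq0 pnatr_eq0 subr_eq0 /= => /eqP.
apply: (nonneg_quadratic_linear_coef0 _ _ (sqnorm_ge0 Hip v)) => t.
have := Jw _ (subspaceD HS Sw (subspaceZ HS t%:C Sv)).
rewrite /energy sqnormD // sqnormZ // reipZr // (antilinearD Hg) ?ReD
  ?(Re_antilinearZ HS Hg) //; try exact: subspaceZ.
lra.
Qed.

Lemma riesz : exists2 w, S w & forall v, S v -> ip w v = g v.
Proof.
have [vs Hvs] := minimizing_sequence.
have [w hw] := Hc _ (minimizing_cauchy Hvs).
have Sw : S w by apply: (HSc vs) => // n; case: (Hvs n).
have Jmin v : S v -> energy w <= energy v.
  by move=> Sv; apply: le_trans (energy_limit_le Hvs hw Sw) (energy_inf_le Sv).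
have hre := energy_minimizer_reip Sw Jmin.
exists w => // v Sv; apply: complex_ext; first exact: hre.
have := hre _ (subspaceZ HS 'i Sv).
by rewrite /reip ipZr // Re_conji_mul (antilinearZ HS Hg) // Re_conji_mul.
Qed.

End Riesz.

Lemma hcvg_unique {R : realType} {V : lmodType R[i]} {ip : V -> V -> R[i]}
    {u : nat -> V} {l l' : V} :
  is_inner_product ip -> hcvg ip u l -> hcvg ip u l' -> l = l'.
Proof.
move=> Hip hl hl'; apply/eqP; rewrite eq_sym -subr_eq0; apply/eqP.
apply: (hnorm_small_eq0 Hip) => e e0.
have [N hN] := hl _ (divr_gt0 e0 (ltr0Sn R 1)).
have [N' hN'] := hl' _ (divr_gt0 e0 (ltr0Sn R 1)).
have := hN (N + N')%N (leq_addr _ _); have := hN' (N + N')%N (leq_addl _ _).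
have := hnormD_le Hip (u (N + N')%N - l) (l' - u (N + N')%N).
rewrite addrC addrA subrK (hnormBC Hip l'); move=> *; lra.
Qed.

Lemma ip_eq_on {R : realType} {V : lmodType R[i]} {ip : V -> V -> R[i]}
    {S : V -> Prop} {x y : V} :
  is_inner_product ip -> subspace S -> S x -> S y ->
  (forall v, S v -> ip x v = ip y v) -> x = y.
Proof.
move=> Hip HS Sx Sy h; apply/eqP; rewrite -subr_eq0; apply/eqP/(ip_eq0 Hip).
by rewrite (ipBl Hip) h ?subrr //; apply: subspaceB.
Qed.

Definition image_on {T U : Type} (S : T -> Prop) (A : T -> U) (y : U) : Prop :=
  exists2 u, S u & y = A u.

Section LaxMilgram.
Context {R : realType} {V : lmodType R[i]} {ip : V -> V -> R[i]}.
Hypotheses (Hip : is_inner_product ip) (Hc : complete ip).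
Context {S : V -> Prop} {B : V -> V -> R[i]} {f : V -> R[i]} {M alpha Kf : R}.
Hypotheses (HS : subspace S) (HSc : closed_set ip S).
Hypothesis HB_antilinear : forall u, S u -> antilinear_on S (B u).
Hypothesis HB_linear : forall v a x y, S v -> S x -> S y ->
  B (a *: x + y) v = a * B x v + B y v.
Hypothesis HB_bounded : forall u v, S u -> S v -> Re (B u v) <= M * hnorm ip u * hnorm ip v.
Hypothesis Halpha : 0 < alpha.
Hypothesis HB_coercive : forall u, S u -> alpha * sqnorm ip u <= Re (B u u).
Hypothesis Hf : antilinear_on S f.
Hypothesis Hf_bounded : forall v, S v -> Re (f v) <= Kf * hnorm ip v.
Local Notation nm := (hnorm ip).

Lemma representing_operator :
  exists A : V -> V, forall u, S u -> S (A u) /\ forall v, S v -> ip (A u) v = B u v.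
Proof.
suff /choice[A HA] : forall u, exists w, S u -> S w /\ forall v, S v -> ip w v = B u v.
  by exists A.
move=> u; have [Su|nSu] := EM (S u); last by exists 0.
have [w Sw hw] := riesz Hip Hc HS HSc (HB_antilinear _ Su) (fun v Sv => HB_bounded _ _ Su Sv).
by exists w.
Qed.

Section RepresentingOperator.
Context {A : V -> V}.
Hypothesis HA : forall u, S u -> S (A u) /\ forall v, S v -> ip (A u) v = B u v.

Let SA {u} : S u -> S (A u). Proof. by case/HA. Qed.
Let ipA {u v} : S u -> S v -> ip (A u) v = B u v. Proof. by case/HA => _; apply. Qed.

Lemma representing_linear a x y : S x -> S y -> A (a *: x + y) = a *: A x + A y.
Proof.
move=> Sx Sy; have Sxy := subspaceP HS a Sx Sy.
apply: (ip_eq_on Hip HS (SA Sxy) (subspaceP HS a (SA Sx) (SA Sy))) => v Sv.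
by rewrite (ipL Hip) !ipA // HB_linear.
Qed.

Lemma representingB {x y} : S x -> S y -> A (x - y) = A x - A y.
Proof. by move=> Sx Sy; rewrite addrC -scaleN1r representing_linear // scaleN1r addrC. Qed.

Lemma representing_bounded {u} : S u -> nm (A u) <= `|M| * nm u.
Proof.
move=> Su; have h : sqnorm ip (A u) <= `|M| * nm u * nm (A u).
  rewrite /sqnorm (ipA Su (SA Su)); apply: (le_trans (HB_bounded _ _ Su (SA Su))).
  apply: ler_wpM2r; first exact: hnorm_ge0.
  by apply: ler_wpM2r; [exact: hnorm_ge0 | exact: ler_norm].
rewrite -[nm (A u)]mul1r; apply: sqr_le_cancel; rewrite ?mulr_ge0 ?hnorm_ge0 //.
by rewrite mul1r hnorm_sqr.
Qed.

Lemma representing_coercive {u} : S u -> alpha * nm u <= nm (A u).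
Proof.
move=> Su; have h : alpha * sqnorm ip u <= nm (A u) * nm u.
  by apply: (le_trans (HB_coercive _ Su)); rewrite -ipA //; exact: cauchy_schwarz.
by apply: sqr_le_cancel; rewrite ?hnorm_ge0 ?hnorm_sqr.
Qed.

Lemma representing_hcvg us u : (forall n, S (us n)) -> S u -> hcvg ip us u ->
  hcvg ip (A \o us) (A u).
Proof.
move=> Sus Su hu e e0.
have M1 : 0 < `|M| + 1 by rewrite ltr_wpDl.
have [N hN] := hu _ (divr_gt0 e0 M1); exists N => n hn /=.
have := hN _ hn; rewrite ltr_pdivlMr // => hx.
rewrite -(representingB (Sus n) Su).
apply: le_lt_trans (representing_bounded (subspaceB HS (Sus n) Su)) _.
have := hnorm_ge0 ip (us n - u); nra.
Qed.

Lemma representing_image_subspace : subspace (image_on S A).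
Proof.
split.
  exists 0; first exact: subspace0.
  by have := representingB (subspace0 HS) (subspace0 HS); rewrite subr0 subrr.
move=> a _ _ [x Sx ->] [y Sy ->].
by exists (a *: x + y); [exact: subspaceP | rewrite representing_linear].
Qed.

Lemma representing_image_closed : closed_set ip (image_on S A).
Proof.
move=> ys l hys hl.
have /choice[us Hus] : forall n, exists u, S u /\ ys n = A u.
  by move=> n; have [u Su ->] := hys n; exists u.
have Sus n : S (us n) by case: (Hus n).
have ysE : ys = A \o us by apply: funext => n; case: (Hus n).
have hcau : hcauchy ip us.
  move=> e e0; have [N hN] := hcvg_cauchy Hip hl _ (mulr_gt0 e0 Halpha).
  exists N => n m hn hm; have := hN n m hn hm.
  rewrite ysE /= -(representingB (Sus n) (Sus m)).
  move=> h; rewrite -(ltr_pM2l Halpha); rewrite mulrC in h.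
  exact: le_lt_trans (representing_coercive (subspaceB HS (Sus n) (Sus m))) h.
have [u hu] := Hc _ hcau; have Su := HSc _ _ Sus hu.
exists u => //; apply: (hcvg_unique Hip hl); rewrite ysE.
exact: representing_hcvg.
Qed.

End RepresentingOperator.

Lemma lax_milgram : exists2 u, S u & forall v, S v -> B u v = f v.
Proof.
have [A HA] := representing_operator.
have SA u : S u -> S (A u) by case/HA.
have ipA u v : S u -> S v -> ip (A u) v = B u v by move=> Su; case: (HA u Su) => _; apply.
have [F SF hF] := riesz Hip Hc HS HSc Hf Hf_bounded.
have HF : antilinear_on (image_on S A) (ip F).
  by move=> a x y _ _; rewrite (ipDr Hip) (ipZr Hip).
have [_ [u Su ->] hu] := riesz Hip Hc (representing_image_subspace HA)
  (representing_image_closed HA) HF (fun v _ => cauchy_schwarz Hip F v).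
have Sr : S (F - A u) := subspaceB HS SF (SA u Su).
have /subr0_eq FA : F - A u = 0.
  apply: (sqnorm_eq0 Hip); apply/eqP; rewrite eq_le sqnorm_ge0 // andbT.
  rewrite -(pmulr_rle0 _ Halpha); apply: (le_trans (HB_coercive _ Sr)).
  rewrite -(ipA _ _ Sr Sr) (ipC Hip) ReJ (ipBl Hip) hu ?subrr //.
  by exists (F - A u).
by exists u => // v Sv; rewrite -ipA // -FA hF.
Qed.

End LaxMilgram.

Definition prod_ip {R : realType} {V0 V1 : lmodType R[i]}
  (ip0 : V0 -> V0 -> R[i]) (ip1 : V1 -> V1 -> R[i]) (p q : V0 * V1) : R[i] :=
  ip0 p.1 q.1 + ip1 p.2 q.2.

Section ProductSpace.
Context {R : realType} {V0 V1 : lmodType R[i]}.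
Context {ip0 : V0 -> V0 -> R[i]} {ip1 : V1 -> V1 -> R[i]}.
Hypotheses (H0 : is_inner_product ip0) (H1 : is_inner_product ip1).
Local Notation ip := (prod_ip ip0 ip1).

Lemma prod_ip_inner : is_inner_product ip.
Proof.
split.
- by move=> c x y z; rewrite /prod_ip /= (ipL H0) (ipL H1); ring.
- by move=> x y; rewrite /prod_ip (ipC H0) (ipC H1) rmorphD.
- by move=> x; rewrite /prod_ip addr_ge0 ?ip_ge0.
- case=> x1 x2; rewrite /prod_ip /= => /eqP; rewrite paddr_eq0 ?ip_ge0 //.
  by case/andP => /eqP /(ip_eq0 H0) -> /eqP /(ip_eq0 H1) ->.
Qed.

Lemma sqnorm_prod p : sqnorm ip p = sqnorm ip0 p.1 + sqnorm ip1 p.2.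
Proof. exact: ReD. Qed.

Lemma hnorm_prod_fst p : hnorm ip0 p.1 <= hnorm ip p.
Proof.
rewrite /hnorm ler_sqrt -!/(sqnorm _ _) ?sqnorm_ge0 ?sqnorm_prod ?lerDl ?sqnorm_ge0 //.
exact: prod_ip_inner.
Qed.

Lemma hnorm_prod_snd p : hnorm ip1 p.2 <= hnorm ip p.
Proof.
rewrite /hnorm ler_sqrt -!/(sqnorm _ _) ?sqnorm_ge0 ?sqnorm_prod ?lerDr ?sqnorm_ge0 //.
exact: prod_ip_inner.
Qed.

Lemma hnorm_prod_le p : hnorm ip p <= hnorm ip0 p.1 + hnorm ip1 p.2.
Proof.
have := hnorm_ge0 ip0 p.1; have := hnorm_ge0 ip1 p.2; move=> *.
rewrite -(ler_pXn2r (_ : 0 < 2)%N) ?nnegrE ?addr_ge0 ?hnorm_ge0 //.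
rewrite (hnorm_sqr prod_ip_inner) sqnorm_prod -(hnorm_sqr H0) -(hnorm_sqr H1); nra.
Qed.

Lemma prod_complete : complete ip0 -> complete ip1 -> complete ip.
Proof.
move=> c0 c1 u hu.
have [l1 hl1] : exists l1, hcvg ip0 (fun n => (u n).1) l1.
  apply: c0 => e e0; have [N hN] := hu e e0; exists N => n m hn hm.
  exact: le_lt_trans (hnorm_prod_fst (u n - u m)) (hN n m hn hm).
have [l2 hl2] : exists l2, hcvg ip1 (fun n => (u n).2) l2.
  apply: c1 => e e0; have [N hN] := hu e e0; exists N => n m hn hm.
  exact: le_lt_trans (hnorm_prod_snd (u n - u m)) (hN n m hn hm).
exists (l1, l2) => e e0.
have [N1 hN1] := hl1 _ (divr_gt0 e0 (ltr0Sn R 1)).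
have [N2 hN2] := hl2 _ (divr_gt0 e0 (ltr0Sn R 1)).
exists (N1 + N2)%N => n hn.
have := hN1 n (leq_trans (leq_addr _ _) hn); have := hN2 n (leq_trans (leq_addl _ _) hn).
have := hnorm_prod_le (u n - (l1, l2)); move=> /= *; lra.
Qed.

End ProductSpace.

Lemma lax_milgram_operator {R : realType} {V : lmodType R[i]} {ip : V -> V -> R[i]}
    {S : V -> Prop} (T : V -> V) (p : V) :
  is_inner_product ip -> complete ip -> subspace S -> closed_set ip S ->
  (forall c x y, T (c *: x + y) = c *: T x + T y) -> bounded ip T -> coercive ip T ->
  exists2 u, S u & forall v, S v -> ip (T u) v = ip p v.
Proof.
move=> Hip Hc HS HSc Tlin [M TM] [alpha [alpha0 Tco]].
have ip_antilinear w : antilinear_on S (ip w).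
  by move=> c x y _ _; rewrite (ipDr Hip) (ipZr Hip).
apply: (@lax_milgram _ _ _ Hip Hc S (fun u => ip (T u)) (ip p) M alpha (hnorm ip p)) => //.
- by move=> v c x y _ _ _; rewrite Tlin (ipL Hip).
- move=> u v _ _; apply: le_trans (cauchy_schwarz Hip _ _) _.
  by apply: ler_wpM2r; rewrite ?hnorm_ge0.
- by move=> u _; rewrite -(hnorm_sqr Hip).
- by move=> v _; exact: cauchy_schwarz.
Qed.

Definition graph {T U : Type} (domA : T -> Prop) (A : T -> U) (p : T * U) : Prop :=
  domA p.1 /\ p.2 = A p.1.

Section LinearOperator.
Context {R : realType} {V W : lmodType R[i]} {domA : V -> Prop} {A : V -> W}.
Hypothesis HA : is_linop domA A.

Lemma linop_dom0 : domA 0. Proof. by case: HA. Qed.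

Lemma linop0 : A 0 = 0.
Proof.
have [_ h] := HA.2 1 0 0 linop_dom0 linop_dom0; move: h; rewrite scaler0 addr0 scale1r => h.
by apply: (addrI (A 0)); rewrite addr0 -h.
Qed.

Lemma linopD {x y} : domA x -> domA y -> domA (x + y) /\ A (x + y) = A x + A y.
Proof. by move=> dx dy; have := HA.2 1 x y dx dy; rewrite !scale1r. Qed.

Lemma linopB {x y} : domA x -> domA y -> domA (x - y) /\ A (x - y) = A x - A y.
Proof.
move=> dx dy; have := HA.2 (-1) y x dy dx.
by rewrite !scaleN1r (addrC (- y)) (addrC (- A y)).
Qed.

Lemma graph_subspace : subspace (graph domA A).
Proof.
split; first by split => /=; [exact: linop_dom0 | rewrite linop0].
move=> c x y [dx ex] [dy ey]; have [d e] := HA.2 c x.1 y.1 dx dy.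
by split => //=; rewrite e ex ey.
Qed.

End LinearOperator.

Lemma graph_closed {R : realType} {V0 V1 : lmodType R[i]}
    {ip0 : V0 -> V0 -> R[i]} {ip1 : V1 -> V1 -> R[i]} {domA : V0 -> Prop} {A : V0 -> V1} :
  is_inner_product ip0 -> is_inner_product ip1 -> closed_op ip0 ip1 domA A ->
  closed_set (prod_ip ip0 ip1) (graph domA A).
Proof.
move=> H0 H1 HA u l hu hl.
have h1 : hcvg ip0 (fun n => (u n).1) l.1.
  move=> e e0; have [N hN] := hl e e0; exists N => n hn.
  exact: le_lt_trans (hnorm_prod_fst H0 H1 (u n - l)) (hN n hn).
have h2 : hcvg ip1 (A \o (fun n => (u n).1)) l.2.
  move=> e e0; have [N hN] := hl e e0; exists N => n hn /=.
  rewrite -(proj2 (hu n)); exact: le_lt_trans (hnorm_prod_snd H0 H1 (u n - l)) (hN n hn).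
by have [dl el] := HA _ _ _ (fun n => proj1 (hu n)) h1 h2.
Qed.

Definition diag_op {T0 T1 : Type} (m : T0 -> T0) (a : T1 -> T1) (p : T0 * T1) : T0 * T1 :=
  (m p.1, a p.2).

Section DiagonalOperator.
Context {R : realType} {V0 V1 : lmodType R[i]}.
Context {ip0 : V0 -> V0 -> R[i]} {ip1 : V1 -> V1 -> R[i]}.
Hypotheses (H0 : is_inner_product ip0) (H1 : is_inner_product ip1).
Variables (m : {linear V0 -> V0}) (a : {linear V1 -> V1}).

Lemma diag_op_linear c x y : diag_op m a (c *: x + y) = c *: diag_op m a x + diag_op m a y.
Proof. by rewrite /diag_op /= !linearP. Qed.

Lemma diag_op_bounded : bounded ip0 m -> bounded ip1 a ->
  bounded (prod_ip ip0 ip1) (diag_op m a).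
Proof.
move=> [cm hm] [ca ha]; exists (`|cm| + `|ca|) => p.
apply: le_trans (hnorm_prod_le H0 H1 _) _; rewrite /= mulrDl.
apply: lerD.
- apply: le_trans (hm _) (le_trans (ler_wpM2r (hnorm_ge0 _ _) (ler_norm cm)) _).
  by apply: ler_wpM2l; [exact: normr_ge0 | exact: hnorm_prod_fst].
- apply: le_trans (ha _) (le_trans (ler_wpM2r (hnorm_ge0 _ _) (ler_norm ca)) _).
  by apply: ler_wpM2l; [exact: normr_ge0 | exact: hnorm_prod_snd].
Qed.

Lemma diag_op_coercive : coercive ip0 m -> coercive ip1 a ->
  coercive (prod_ip ip0 ip1) (diag_op m a).
Proof.
move=> [mum [mum0 hm]] [mua [mua0 ha]]; exists (Num.min mum mua).
split; first by rewrite lt_min mum0.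
move=> p; rewrite (hnorm_sqr (prod_ip_inner H0 H1)) sqnorm_prod /prod_ip ReD mulrDr.
have := hm p.1; have := ha p.2; rewrite (hnorm_sqr H0) (hnorm_sqr H1) => h2 h1.
apply: lerD; [apply: le_trans h1 | apply: le_trans h2]; apply: ler_wpM2r;
  rewrite ?sqnorm_ge0 ?ge_min ?lexx ?orbT //.
Qed.

End DiagonalOperator.

Lemma ip_adjoint_eq_weak {R : realType} {V0 V1 : lmodType R[i]}
    {ip0 : V0 -> V0 -> R[i]} {ip1 : V1 -> V1 -> R[i]} {x0 p v : V0} {x1 y q : V1} :
  is_inner_product ip0 -> is_inner_product ip1 ->
  ip1 x1 (y - q) = ip0 x0 (p - v) <-> ip0 v x0 + ip1 y x1 = ip0 p x0 + ip1 q x1.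
Proof.
move=> H0 H1; rewrite (ipC H1) (ipC H0) (ipBl H1) (ipBl H0).
split=> [/conj_inj/subr_eq_swap // | h].
by congr (_^*); apply/subr_eq_swap.
Qed.

Section WeakFormulation.
Context {R : realType} {V0 V1 : lmodType R[i]}.
Context {ip0 : V0 -> V0 -> R[i]} {ip1 : V1 -> V1 -> R[i]}.
Hypotheses (H0 : is_inner_product ip0) (H1 : is_inner_product ip1).
Context {domG : V0 -> Prop} {G : V0 -> V1}.
Hypothesis Glin : is_linop domG G.
Variables (m : {linear V0 -> V0}) (a : {linear V1 -> V1}).
Hypotheses (mcoer : coercive ip0 m) (acoer : coercive ip1 a).
Variables (p : V0) (q : V1).

Definition weak_solution (u : V0) : Prop :=
  domG u /\ forall x, domG x -> ip0 (m u) x + ip1 (a (G u)) (G x) = ip0 p x + ip1 q (G x).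

Lemma weak_solution_adjoint {u} : domG u ->
  weak_solution u <-> adjoint_graph ip0 ip1 domG G (a (G u) - q) (p - m u).
Proof.
move=> du; split=> [[_ hu] x dx | hu]; first exact/(ip_adjoint_eq_weak H0 H1)/hu.
by split=> // x dx; apply/(ip_adjoint_eq_weak H0 H1)/hu.
Qed.

Lemma weak_solution_exists : complete ip0 -> complete ip1 -> closed_op ip0 ip1 domG G ->
  bounded ip0 m -> bounded ip1 a -> exists u, weak_solution u.
Proof.
move=> c0 c1 Gclosed mbdd abdd.
have [[u _] [/= du ->] hu] := lax_milgram_operator (diag_op m a) (p, q)
  (prod_ip_inner H0 H1) (prod_complete H0 H1 c0 c1) (graph_subspace Glin)
  (graph_closed H0 H1 Gclosed) (diag_op_linear m a) (diag_op_bounded H0 H1 _ _ mbdd abdd)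
  (diag_op_coercive H0 H1 _ _ mcoer acoer).
by exists u; split=> // x dx; exact: hu (x, G x) (conj dx erefl).
Qed.

Lemma weak_solution_unique {u u'} : weak_solution u -> weak_solution u' -> u = u'.
Proof.
move=> [du hu] [du' hu']; have [dw Gw] := linopB Glin du du'.
set w := u - u' in dw Gw.
have hw : ip0 (m w) w + ip1 (a (G w)) (G w) = 0.
  have -> : ip0 (m w) w + ip1 (a (G w)) (G w) =
      (ip0 (m u) w + ip1 (a (G u)) (G w)) - (ip0 (m u') w + ip1 (a (G u')) (G w)).
    rewrite {1}/w linearB (ipBl H0) {1}Gw linearB (ipBl H1); ring.
  by rewrite hu // hu' // subrr.
have [mum [mum0 hm]] := mcoer; have [mua [mua0 ha]] := acoer.
have hsum := congr1 (@Re R) hw; rewrite ReD /= in hsum.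
have := hm w; have := ha (G w); have := sqr_ge0 (hnorm ip1 (G w)) => h0 h2 h1.
have : mum * hnorm ip0 w ^+ 2 <= 0 by nra.
rewrite pmulr_rle0 // (hnorm_sqr H0) => hle.
by apply/eqP; rewrite -subr_eq0; apply/eqP/(sqnorm_eq0 H0)/eqP; rewrite eq_le hle sqnorm_ge0.
Qed.

End WeakFormulation.

Lemma adjoint_extension_shift {R : realType} {V0 V1 : lmodType R[i]}
    {ip0 : V0 -> V0 -> R[i]} {ip1 : V1 -> V1 -> R[i]} {domG : V0 -> Prop} {G : V0 -> V1}
    {domD : V1 -> Prop} {D : V1 -> V0} {y q : V1} {z : V0} :
  is_linop domD D ->
  (forall y z, adjoint_graph ip0 ip1 domG G y z -> domD y /\ D y = - z) ->
  domD q -> adjoint_graph ip0 ip1 domG G (y - q) z -> domD y /\ D y = D q - z.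
Proof.
move=> Dlin hGD dq /hGD[dyq eyq]; have [dy ey] := linopD Dlin dyq dq.
by rewrite subrK in dy ey; rewrite ey eyq addrC.
Qed.

Theorem proposition2p15 (R : realType)
  (V0 V1 : lmodType R[i]) (ip0 : V0 -> V0 -> R[i]) (ip1 : V1 -> V1 -> R[i])
  (H0hilb : is_hilbert ip0) (H1hilb : is_hilbert ip1)
  (domG : V0 -> Prop) (G : V0 -> V1)
  (Glin : is_linop domG G) (Gdense : densely_defined ip0 domG)
  (Gclosed : closed_op ip0 ip1 domG G)
  (domD : V1 -> Prop) (D : V1 -> V0)
  (Dlin : is_linop domD D) (Ddense : densely_defined ip1 domD)
  (Dclosed : closed_op ip1 ip0 domD D)
  (* - adjoint(G) is a restriction of D *)
  (hGD : forall (y : V1) (z : V0), adjoint_graph ip0 ip1 domG G y z ->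
           domD y /\ D y = - z)
  (a : {linear V1 -> V1}) (m : {linear V0 -> V0})
  (abdd : bounded ip1 a) (mbdd : bounded ip0 m)
  (acoer : coercive ip1 a) (mcoer : coercive ip0 m)
  (q0 : V1)
  (* q0 \in BD(D): q0 \in dom D, orthogonal in the graph inner product of D
     to dom Dring = dom adjoint(G) *)
  (hq0dom : domD q0)
  (hq0BD : forall r : V1, dom_adjoint ip0 ip1 domG G r ->
             ip1 q0 r + ip0 (D q0) (D r) = 0) :
  exists! u : V0,
    (domG u /\ domD (a (G u))) /\
    m u - D (a (G u)) = 0 /\
    dom_adjoint ip0 ip1 domG G (a (G u) - q0).
Proof.
have [H0 c0] := H0hilb; have [H1 c1] := H1hilb.
have [u [du hu]] :=
  weak_solution_exists H0 H1 Glin m a mcoer acoer (D q0) q0 c0 c1 Gclosed mbdd abdd.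
have hadj := (weak_solution_adjoint H0 H1 m a (D q0) q0 du).1 (conj du hu).
have [dDa Da] := adjoint_extension_shift Dlin hGD hq0dom hadj.
rewrite opprB subrKC in Da.
exists u; split; first by split; [split | split; [rewrite Da subrr | exists (D q0 - m u)]].
move=> u' [[du' _] [/eqP eq_u' [z hz]]].
have [_ Dz] := adjoint_extension_shift Dlin hGD hq0dom hz.
move: eq_u'; rewrite subr_eq0 Dz => /eqP mu'.
apply: (weak_solution_unique H0 H1 Glin m a mcoer acoer (D q0) q0 (conj du hu)).
by apply/(weak_solution_adjoint H0 H1 m a (D q0) q0 du'); rewrite mu' opprB subrKC.
Qed.
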